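(* Let $G$ and $H$ be graphs. (i) If $G$ has a point-finite and honest $H$-decomposition into connected parts of finitely bounded size and $H$ is accessible, then $G$ is accessible. (ii) If $G$ has an honest $H$-decomposition into finite connected parts such that the graphs $H_v\subseteq H$ ($v\in V(G)$) have finitely bounded order and $G$ is accessible, then $H$ is accessible.
   Context: An $H$-decomposition of $G$ is a pair $(H,(G_h)_{h\in H})$ of subgraphs $G_h\subseteq G$ with $G=\bigcup_h G_h$ and, for every vertex $v$ of $G$, $H_v:=H[\{h:v\in G_h\}]$ connected. It is point-finite if every $H_v$ is finite and honest if $G_h\cap G_{h'}\neq\emptyset$ for every edge $hh'$ of $H$; its parts are the $G_h$. An end of a graph is an equivalence class of rays, two rays being equivalent if for every finite vertex set $X$ they have tails in the same component of the graph minus $X$. A separation of a graph is $\{A,B\}$ with $A\cup B$ the vertex set and no edge between $A\setminus B$ and $B\setminus A$, of order $|A\cap B|$; a finite-order separation distinguishes two ends if rays of one have tails in the subgraph induced by $A$ and rays of the other have tails in that induced by $B$. A graph is accessible if there is $K\in\mathbb{N}$ such that every two of its ends are distinguished by a separation of order at most $K$. *)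

From Stdlib Require Import List Arith.
Import ListNotations.

Record Graph := {
  vert :> Type;
  adj : vert -> vert -> Prop;
  adj_sym : forall x y, adj x y -> adj y x;
  adj_irrefl : forall x, ~ adj x x }.

Definition card_le {T : Type} (S : T -> Prop) (n : nat) : Prop :=
  exists l : list T, length l <= n /\ forall x, S x -> In x l.

Definition finite_set {T : Type} (S : T -> Prop) : Prop := exists n, card_le S n.

Inductive reach {T : Type} (R : T -> T -> Prop) (S : T -> Prop) : T -> T -> Prop :=
  | reach_refl x : S x -> reach R S x x
  | reach_step x y z : reach R S x y -> R y z -> S z -> reach R S x z.

Definition connected_sub {T : Type} (S : T -> Prop) (R : T -> T -> Prop) : Prop :=
  (exists x, S x) /\ forall x y, S x -> S y -> reach R S x y.

Definition connected_induced (G : Graph) (S : G -> Prop) : Prop :=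
  connected_sub S (@adj G).

(** H-decomposition (H, (G_h)_{h in H}) of G: part G_h has vertex set [GS h]
    and (symmetric) edge relation [GE h]. *)
Definition Hdecomp (G H : Graph) (GS : H -> G -> Prop) (GE : H -> G -> G -> Prop) : Prop :=
  (forall h x y, GE h x y -> adj G x y /\ GS h x /\ GS h y) /\
  (forall h x y, GE h x y -> GE h y x) /\
  (forall v : G, exists h, GS h v) /\
  (forall x y : G, adj G x y -> exists h, GE h x y) /\
  (forall v : G, connected_induced H (fun h => GS h v)).

Arguments Hdecomp {G H} GS GE.

Definition point_finite (G H : Graph) (GS : H -> G -> Prop) : Prop :=
  forall v : G, finite_set (fun h => GS h v).

Arguments point_finite {G H} GS.

Definition honest (G H : Graph) (GS : H -> G -> Prop) : Prop :=
  forall h h' : H, adj H h h' -> exists v : G, GS h v /\ GS h' v.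

Arguments reach {T} R S _ _.

Arguments honest {G H} GS.

Definition ray (G : Graph) (r : nat -> G) : Prop :=
  (forall m n, r m = r n -> m = n) /\ (forall n, adj G (r n) (r (S n))).

Arguments ray {G} r.

Definition ray_equiv (G : Graph) (r s : nat -> G) : Prop :=
  forall X : list G, exists N M,
    (forall n, N <= n -> ~ In (r n) X) /\
    (forall m, M <= m -> ~ In (s m) X) /\
    reach (@adj G) (fun x => ~ In x X) (r N) (s M).

Arguments ray_equiv {G} r s.

Definition separation (G : Graph) (A B : G -> Prop) : Prop :=
  (forall v, A v \/ B v) /\
  (forall x y, adj G x y -> ~ (A x /\ ~ B x /\ B y /\ ~ A y)).

Arguments separation {G} A B.

Definition tail_in (G : Graph) (A : G -> Prop) (r : nat -> G) : Prop :=
  exists N, forall n, N <= n -> A (r n).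

Arguments tail_in {G} A r.

Definition distinguishes (G : Graph) (A B : G -> Prop) (r s : nat -> G) : Prop :=
  (forall r' : nat -> G, ray r' -> ray_equiv r r' -> tail_in A r') /\
  (forall s' : nat -> G, ray s' -> ray_equiv s s' -> tail_in B s').

Arguments distinguishes {G} A B r s.

Definition accessible (G : Graph) : Prop :=
  exists K : nat, forall r s : nat -> G, ray r -> ray s -> ~ ray_equiv r s ->
    exists A B : G -> Prop,
      separation A B /\ card_le (fun v => A v /\ B v) K /\ distinguishes A B r s.

From Stdlib Require Import List Arith Lia Classical ClassicalEpsilon.
Import ListNotations.

(* Both parts are instances of one symmetric statement about a relation [R] between the
   vertices of graphs [X] and [Y] whose fibres on either side are connected and such that the
   two ends of every edge, of either graph, share a fibre (for an honest H-decomposition into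
   connected parts, [R] is "v lies in G_h", read in either direction): if [X] is accessible,
   the fibres over vertices of [Y] are finite and those over vertices of [X] have at most [K]
   elements, then [Y] is accessible.
   A ray of [Y] lifts to a ray of [X] by walking through the consecutive fibres and jumping to
   last visits. Inequivalent rays lift to inequivalent rays, since a finite set of vertices of
   [Y] meets only finitely many fibres. A separation {A, B} of [X] distinguishing the lifts
   pushes forward to {R(A), R(B)}, whose separator lies in R(A ∩ B) and so has at most
   K |A ∩ B| vertices. *)

Lemma reach_ends {T} (R : T -> T -> Prop) (S : T -> Prop) x y :
  reach R S x y -> S x /\ S y.
Proof. induction 1; tauto. Qed.

Lemma reach_trans {T} (R : T -> T -> Prop) (S : T -> Prop) x y z :
  reach R S x y -> reach R S y z -> reach R S x z.
Proof. intros Hxy Hyz; induction Hyz; eauto using reach_step. Qed.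

Lemma reach_sym {T} (R : T -> T -> Prop) (S : T -> Prop) x y :
  (forall a b, R a b -> R b a) -> reach R S x y -> reach R S y x.
Proof.
  intros Rsym; induction 1 as [x Hx | x y z Hxy IH Hyz Hz].
  - now constructor.
  - apply reach_trans with y; auto.
    apply reach_step with z; [constructor | |]; auto.
    apply (reach_ends _ _ _ _ Hxy).
Qed.

Lemma reach_mono {T} (R R' : T -> T -> Prop) (S S' : T -> Prop) x y :
  (forall a b, R a b -> R' a b) -> (forall a, S a -> S' a) ->
  reach R S x y -> reach R' S' x y.
Proof. intros HR HS; induction 1; [constructor | econstructor]; eauto. Qed.

Lemma card_le_mono {T} (S S' : T -> Prop) n m :
  (forall u, S u -> S' u) -> n <= m -> card_le S' n -> card_le S m.
Proof. intros Hsub Hnm [l [Hl Hin]]. exists l. split; [lia | auto]. Qed.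

Definition rel_image {T U} (R : T -> U -> Prop) (A : T -> Prop) (u : U) : Prop :=
  exists t, A t /\ R t u.

Lemma list_image_card {T U} (R : T -> U -> Prop) K (l : list T) :
  (forall t, card_le (R t) K) -> card_le (rel_image R (fun t => In t l)) (length l * K).
Proof.
  intros HR. induction l as [|a l [L [HL HinL]]].
  - exists []. split; [simpl; lia|]. intros u [t [[] _]].
  - destruct (HR a) as [la [Hla Hinla]]. exists (la ++ L).
    rewrite length_app. split; [simpl; lia|].
    intros u [t [[<- | Ht] Htu]]; apply in_or_app; [left | right]; eauto.
    apply HinL. now exists t.
Qed.

Lemma list_image_finite {T U} (R : T -> U -> Prop) (l : list T) :
  (forall t, finite_set (R t)) -> finite_set (rel_image R (fun t => In t l)).
Proof.
  intros HR. induction l as [|a l [n [L [_ HinL]]]].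
  - exists 0, []. split; [auto|]. intros u [t [[] _]].
  - destruct (HR a) as [m [la [_ Hinla]]]. exists (length (la ++ L)), (la ++ L).
    split; [auto|].
    intros u [t [[<- | Ht] Htu]]; apply in_or_app; [left | right]; eauto.
    apply HinL. now exists t.
Qed.

Lemma bounded_pred_has_max (Q : nat -> Prop) B m :
  Q m -> (forall k, Q k -> k < B) -> exists t, Q t /\ forall k, Q k -> k <= t.
Proof.
  revert m. induction B as [|B IH]; intros m Hm HB.
  - specialize (HB m Hm). lia.
  - destruct (classic (Q B)) as [HQ | HQ].
    + exists B. split; auto. intros k Hk. specialize (HB k Hk). lia.
    + apply (IH m Hm). intros k Hk. specialize (HB k Hk).
      destruct (Nat.eq_dec k B); [subst; contradiction | lia].
Qed.

Lemma injective_eventually_avoids {T} (r : nat -> T) (X : list T) :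
  (forall m n, r m = r n -> m = n) -> exists N, forall n, N <= n -> ~ In (r n) X.
Proof.
  intros Hinj. induction X as [|a X [N HN]].
  - exists 0. intros n _ [].
  - destruct (classic (exists m, r m = a)) as [[m Hm] | Hnone].
    + exists (max N (S m)). intros n Hn [Ha | HX].
      * subst a. apply Hinj in Ha. lia.
      * apply (HN n); auto; lia.
    + exists N. intros n Hn [Ha | HX]; eauto.
      apply (HN n); auto.
Qed.

Lemma injective_preimage_bounded {T} (r : nat -> T) (S : T -> Prop) :
  (forall m n, r m = r n -> m = n) -> finite_set S -> exists B, forall n, S (r n) -> n < B.
Proof.
  intros Hinj [K [l [_ Hl]]]. destruct (injective_eventually_avoids r l Hinj) as [N HN].
  exists N. intros n Hn. destruct (le_lt_dec N n) as [Hle | Hlt]; auto.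
  exfalso. apply (HN n Hle), Hl, Hn.
Qed.

Lemma ray_tail_reach (G : Graph) (r : nat -> G) (S : G -> Prop) N :
  ray r -> (forall n, N <= n -> S (r n)) ->
  forall n, N <= n -> reach (adj G) S (r N) (r n).
Proof.
  intros [_ Hr] HS n Hn. induction Hn as [|n Hn IH].
  - constructor. auto.
  - apply reach_step with (r n); auto.
Qed.

Lemma ray_equiv_refl (G : Graph) (r : nat -> G) : ray r -> ray_equiv r r.
Proof.
  intros Hr X. destruct (injective_eventually_avoids r X (proj1 Hr)) as [N HN].
  exists N, N. repeat split; auto. constructor. auto.
Qed.

Lemma ray_equiv_tails (G : Graph) (r s : nat -> G) (X : list G) :
  ray r -> ray s -> ray_equiv r s ->
  exists N, forall n m, N <= n -> N <= m -> reach (adj G) (fun v => ~ In v X) (r n) (s m).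
Proof.
  intros Hr Hs Heq. destruct (Heq X) as [N [M [HN [HM Hrs]]]].
  exists (max N M). intros n m Hn Hm.
  apply reach_trans with (r N).
  - apply reach_sym; [apply adj_sym|]. apply ray_tail_reach; auto. lia.
  - apply reach_trans with (s M); auto. apply ray_tail_reach; auto. lia.
Qed.

Definition frequently_in {G : Graph} (A : G -> Prop) (r : nat -> G) : Prop :=
  forall N, exists n, N <= n /\ A (r n).

Lemma separation_sym (G : Graph) (A B : G -> Prop) : separation A B -> separation B A.
Proof.
  intros [Hcov Hedge]; split.
  - intros v; destruct (Hcov v); auto.
  - intros x y Hxy Hcross. apply (Hedge y x (adj_sym G x y Hxy)). tauto.
Qed.

Section Separation.
Variables (G : Graph) (A B : G -> Prop).
Hypothesis sepAB : separation A B.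

Lemma reach_meets_separator (S : G -> Prop) x y :
  reach (adj G) S x y -> A x -> B y -> exists z, S z /\ A z /\ B z.
Proof.
  destruct sepAB as [Hcov Hedge].
  induction 1 as [x Hx | x y z Hxy IH Hyz Hz]; intros Hx' Hz'; [eauto|].
  destruct (classic (B y)) as [Hy | Hy]; auto.
  destruct (classic (A z)) as [Hza | Hza]; [eauto|].
  exfalso. apply (Hedge y z Hyz).
  destruct (Hcov y); repeat split; tauto.
Qed.

Lemma reach_avoiding_separator_stays (X : list G) x y :
  (forall v, A v -> B v -> In v X) ->
  reach (adj G) (fun v => ~ In v X) x y -> A x -> A y.
Proof.
  destruct sepAB as [Hcov Hedge]. intros HX.
  induction 1 as [x Hx | x y z Hxy IH Hyz Hz]; intros Hxa; auto.
  specialize (IH Hxa). destruct (classic (A z)) as [Hza | Hza]; auto.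
  exfalso. destruct (reach_ends _ _ _ _ Hxy) as [_ Hy].
  assert (Hzb : B z) by (destruct (Hcov z); tauto).
  assert (Hyb : ~ B y) by (intro; apply Hy, HX; auto).
  apply (Hedge y z Hyz). tauto.
Qed.

Lemma frequently_in_tail_in (r r' : nat -> G) :
  finite_set (fun v => A v /\ B v) -> ray r -> ray r' ->
  frequently_in A r -> ray_equiv r r' -> tail_in A r'.
Proof.
  intros [K [X [_ HX]]] Hr Hr' Hfreq Heq.
  destruct (ray_equiv_tails G r r' X Hr Hr' Heq) as [N HN].
  exists N. intros m Hm. destruct (Hfreq N) as [n [Hn Han]].
  apply (reach_avoiding_separator_stays X (r n)); auto.
Qed.

End Separation.

Lemma separation_distinguishes (G : Graph) (A B : G -> Prop) (r s : nat -> G) :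
  separation A B -> finite_set (fun v => A v /\ B v) -> ray r -> ray s ->
  frequently_in A r -> frequently_in B s -> distinguishes A B r s.
Proof.
  intros Hsep [K [X [HK HX]]] Hr Hs HA HB. split; intros r' Hr' Heq.
  - apply (frequently_in_tail_in G A B) with r; auto. exists K, X; auto.
  - apply (frequently_in_tail_in G B A) with s; auto.
    + apply separation_sym, Hsep.
    + exists K, X. split; auto. intros v [Hb Ha]; auto.
Qed.

Definition diverges (g : nat -> nat) : Prop :=
  forall N, exists K, forall k, K <= k -> N <= g k.

Section Walks.
Variable X : Graph.

Definition lazy_adj (x y : X) : Prop := x = y \/ adj X x y.

Definition lazy_walk (w : nat -> X) : Prop := forall m, lazy_adj (w m) (w (S m)).

Fixpoint lazy_path (x : X) (l : list X) (y : X) : Prop :=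
  match l with
  | [] => lazy_adj x y
  | a :: l' => lazy_adj x a /\ lazy_path a l' y
  end.

Lemma lazy_path_snoc x l y z : lazy_path x l y -> lazy_adj y z -> lazy_path x (l ++ [y]) z.
Proof. revert x; induction l; simpl; intuition. Qed.

Lemma reach_lazy_path (S : X -> Prop) x y :
  reach (adj X) S x y -> exists l, lazy_path x l y /\ Forall S l.
Proof.
  induction 1 as [x Hx | x y z Hxy [l [Hl HS]] Hyz Hz].
  - exists []. split; [now left | constructor].
  - exists (l ++ [y]). split.
    + apply lazy_path_snoc; auto. now right.
    + apply Forall_app. split; auto. repeat constructor. apply (reach_ends _ _ _ _ Hxy).
Qed.

(* A walk visiting every vertex finitely often contains a ray: jump each time to the
   last visit of the current vertex. *)
Lemma ray_of_lazy_walk (w : nat -> X) :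
  lazy_walk w -> (forall v, exists B, forall m, w m = v -> m < B) ->
  exists t : nat -> nat, (forall k, k <= t k) /\ ray (fun k => w (t k)).
Proof.
  intros Hw Hfin.
  assert (Hlast : forall m, exists l, w l = w m /\ forall m', w m' = w m -> m' <= l).
  { intros m. destruct (Hfin (w m)) as [B HB].
    exact (bounded_pred_has_max (fun k => w k = w m) B m eq_refl HB). }
  destruct (choice _ Hlast) as [last Hl].
  set (t := fun k => Nat.iter k (fun i => last (S i)) (last 0)).
  assert (Ht_max : forall k m', w m' = w (t k) -> m' <= t k).
  { intros [|k] m' E; apply Hl; rewrite E; apply Hl. }
  assert (Ht_succ : forall k, w (t (S k)) = w (S (t k))) by (intros k; apply Hl).
  assert (Ht_lt : forall k, t k < t (S k)) by (intros k; apply Hl; reflexivity).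
  assert (Ht_mono : forall i j, i < j -> t i < t j).
  { intros i j Hij. induction Hij as [|j Hij IH]; [apply Ht_lt|].
    specialize (Ht_lt j). lia. }
  exists t. split; [|split].
  - induction k as [|k IH]; [lia|]. specialize (Ht_lt k). lia.
  - intros i j E. cbv beta in E.
    destruct (Nat.lt_total i j) as [Hij | [Hij | Hij]]; auto; exfalso.
    + specialize (Ht_max i (t j) (eq_sym E)). specialize (Ht_mono i j Hij). lia.
    + specialize (Ht_max j (t i) E). specialize (Ht_mono j i Hij). lia.
  - intros k. cbv beta. rewrite Ht_succ. destruct (Hw (t k)) as [E | E]; auto.
    specialize (Ht_max k (S (t k)) (eq_sym E)). lia.
Qed.

Record cursor := Cursor { segment : nat; here : X; ahead : list X }.

(* The walk runs through [c 0], [q 0], [c 1], [q 1], ...; a cursor in segment [n] is on the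
   path from [c n] to [c (S n)], which lies in [P (S n)]. *)
Section Concatenation.
Variables (P : nat -> X -> Prop) (c : nat -> X) (q : nat -> list X).
Hypothesis c_in : forall n, P (S n) (c n).
Hypothesis q_path : forall n, lazy_path (c n) (q n) (c (S n)) /\ Forall (P (S n)) (q n).

Definition advance (s : cursor) : cursor :=
  match s with
  | Cursor n _ [] => Cursor (S n) (c (S n)) (q (S n))
  | Cursor n _ (a :: l) => Cursor n a l
  end.

Definition concat_cursor (m : nat) : cursor := Nat.iter m advance (Cursor 0 (c 0) (q 0)).

Definition cursor_ok (s : cursor) : Prop :=
  P (S (segment s)) (here s) /\ Forall (P (S (segment s))) (ahead s) /\
  lazy_path (here s) (ahead s) (c (S (segment s))).

Lemma advance_ok s : cursor_ok s -> cursor_ok (advance s) /\ lazy_adj (here s) (here (advance s)).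
Proof.
  destruct s as [n x [|a l]]; unfold cursor_ok; simpl; intros (Hx & Hl & Hp).
  - repeat split; auto; apply q_path.
  - inversion Hl; subst. destruct Hp. repeat split; auto.
Qed.

Lemma concat_cursor_ok m : cursor_ok (concat_cursor m).
Proof.
  unfold concat_cursor. apply Nat.iter_invariant; [intros s Hs; apply advance_ok, Hs|].
  unfold cursor_ok; simpl. repeat split; [apply c_in | apply q_path | apply q_path].
Qed.

Lemma segment_advance s : segment s <= segment (advance s).
Proof. destruct s as [n x [|a l]]; simpl; lia. Qed.

Lemma advance_past_segment n x l :
  segment (Nat.iter (S (length l)) advance (Cursor n x l)) = S n.
Proof.
  revert x. induction l as [|a l IH]; intros x; [reflexivity|].
  cbn [length]. rewrite Nat.iter_succ_r. apply IH.
Qed.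

Lemma concat_segment_diverges : diverges (fun m => segment (concat_cursor m)).
Proof.
  assert (Hmono : forall m m', m <= m' -> segment (concat_cursor m) <= segment (concat_cursor m')).
  { induction 1; [lia|]. eapply Nat.le_trans; [eassumption | apply segment_advance]. }
  assert (Hreach : forall N, exists m, N <= segment (concat_cursor m)).
  { induction N as [|N [m Hm]]; [now exists 0|].
    destruct (concat_cursor m) as [n x l] eqn:E.
    exists (S (length l) + m). unfold concat_cursor. rewrite Nat.iter_add.
    fold (concat_cursor m). rewrite E, advance_past_segment. simpl in Hm. lia. }
  intros N. destruct (Hreach N) as [m Hm]. exists m. intros k Hk.
  eapply Nat.le_trans; [exact Hm | apply Hmono, Hk].
Qed.

End Concatenation.

Lemma lazy_walk_through (P : nat -> X -> Prop) :
  (forall n x y, P n x -> P n y -> reach (adj X) (P n) x y) ->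
  (forall n, exists x, P n x /\ P (S n) x) ->
  exists (w : nat -> X) (idx : nat -> nat), lazy_walk w /\ diverges idx /\ forall m, P (idx m) (w m).
Proof.
  intros Hconn Hmeet. destruct (choice _ Hmeet) as [c Hc].
  assert (Hq : forall n, exists l, lazy_path (c n) l (c (S n)) /\ Forall (P (S n)) l).
  { intros n. apply reach_lazy_path, Hconn; apply Hc. }
  destruct (choice _ Hq) as [q Hq'].
  assert (c_in : forall n, P (S n) (c n)) by apply Hc.
  exists (fun m => here (concat_cursor c q m)), (fun m => S (segment (concat_cursor c q m))).
  split; [|split].
  - intros m. apply (advance_ok P c q); auto. apply concat_cursor_ok; auto.
  - intros N. destruct (concat_segment_diverges c q N) as [K HK].
    exists K. intros k Hk. specialize (HK k Hk). simpl in HK. lia.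
  - intros m. apply concat_cursor_ok; auto.
Qed.

Lemma ray_through (P : nat -> X -> Prop) :
  (forall n x y, P n x -> P n y -> reach (adj X) (P n) x y) ->
  (forall n, exists x, P n x /\ P (S n) x) ->
  (forall x, exists B, forall n, P n x -> n < B) ->
  exists (rho : nat -> X) (g : nat -> nat), ray rho /\ diverges g /\ forall k, P (g k) (rho k).
Proof.
  intros Hconn Hmeet Hfin.
  destruct (lazy_walk_through P Hconn Hmeet) as [w [idx [Hw [Hidx HP]]]].
  destruct (ray_of_lazy_walk w Hw) as [t [Ht Hray]].
  { intros v. destruct (Hfin v) as [B HB]. destruct (Hidx B) as [M HM].
    exists M. intros m <-. destruct (le_lt_dec M m) as [Hle | Hlt]; auto.
    specialize (HM m Hle). specialize (HB _ (HP m)). lia. }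
  exists (fun k => w (t k)), (fun k => idx (t k)). split; [exact Hray | split; auto].
  intros N. destruct (Hidx N) as [K HK]. exists K. intros k Hk. apply HK.
  specialize (Ht k). lia.
Qed.

End Walks.

Record coupling (X Y : Graph) (R : X -> Y -> Prop) : Prop := {
  coupling_fiber_l : forall y, connected_induced X (fun x => R x y);
  coupling_fiber_r : forall x, connected_induced Y (R x);
  coupling_adj_l : forall x x', adj X x x' -> exists y, R x y /\ R x' y;
  coupling_adj_r : forall y y', adj Y y y' -> exists x, R x y /\ R x y' }.

Lemma coupling_flip (X Y : Graph) (R : X -> Y -> Prop) :
  coupling X Y R -> coupling Y X (fun y x => R x y).
Proof. intros []; constructor; auto. Qed.

Lemma honest_decomp_coupling (G H : Graph) (GS : H -> G -> Prop) (GE : H -> G -> G -> Prop) :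
  Hdecomp GS GE -> honest GS -> (forall h, connected_sub (GS h) (GE h)) -> coupling H G GS.
Proof.
  intros (HGE & _ & _ & Hedges & Hfib) Hhon Hconn. constructor; auto.
  - intros h. destruct (Hconn h) as [Hne Hreach]. split; auto.
    intros x y Hx Hy. apply reach_mono with (GE h) (GS h); auto.
    intros a b Hab. apply (HGE _ _ _ Hab).
  - intros v v' Hvv'. destruct (Hedges v v' Hvv') as [h Hh].
    exists h. apply (HGE _ _ _ Hh).
Qed.

Section Transfer.
Variables (X Y : Graph) (R : X -> Y -> Prop).
Hypothesis cR : coupling X Y R.

Definition cofinally_related (rho : nat -> X) (r : nat -> Y) : Prop :=
  forall N M, exists k n, N <= k /\ M <= n /\ R (rho k) (r n).

Lemma ray_lift (r : nat -> Y) :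
  (forall x, finite_set (R x)) -> ray r -> exists rho, ray rho /\ cofinally_related rho r.
Proof.
  intros Hfin Hr.
  destruct (ray_through X (fun n x => R x (r n))) as [rho [g [Hrho [Hg HR]]]].
  - intros n x y Hx Hy. apply (coupling_fiber_l _ _ _ cR (r n)); auto.
  - intros n. apply (coupling_adj_r _ _ _ cR), Hr.
  - intros x. apply (injective_preimage_bounded r (R x) (proj1 Hr) (Hfin x)).
  - exists rho. split; auto. intros N M. destruct (Hg M) as [K HK].
    exists (max N K), (g (max N K)). repeat split; auto; [lia | apply HK; lia].
Qed.

Lemma reach_avoiding_lift (XX : list X) (XY : list Y) x x' y y' :
  (forall x y, In y XY -> R x y -> In x XX) ->
  reach (adj X) (fun x => ~ In x XX) x x' -> R x y -> R x' y' ->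
  reach (adj Y) (fun y => ~ In y XY) y y'.
Proof.
  intros HXX Hxx'. revert y y'.
  induction Hxx' as [x Hx | x x1 x2 Hxx1 IH Hx12 Hx2]; intros y y' Hy Hy'.
  - apply reach_mono with (adj Y) (R x); auto.
    + intros z Hz Hin. eauto.
    + apply (coupling_fiber_r _ _ _ cR x); auto.
  - destruct (coupling_adj_l _ _ _ cR x1 x2 Hx12) as [z [Hz1 Hz2]].
    apply reach_trans with z; auto.
    apply reach_mono with (adj Y) (R x2); auto.
    + intros u Hu Hin. eauto.
    + apply (coupling_fiber_r _ _ _ cR x2); auto.
Qed.

(* A finite set of vertices of [Y] is met by only finitely many fibres, so a connection
   of the rays above avoiding those fibres projects to a connection avoiding the set. *)
Lemma ray_equiv_descends (rho sigma : nat -> X) (r s : nat -> Y) :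
  (forall y, finite_set (fun x => R x y)) ->
  ray rho -> ray sigma -> ray r -> ray s ->
  cofinally_related rho r -> cofinally_related sigma s ->
  ray_equiv rho sigma -> ray_equiv r s.
Proof.
  intros Hfin Hrho Hsigma Hr Hs Hrel_r Hrel_s Heq XY.
  destruct (list_image_finite (fun y x => R x y) XY Hfin) as [n [XX [_ HXX]]].
  destruct (ray_equiv_tails X rho sigma XX Hrho Hsigma Heq) as [N HN].
  destruct (injective_eventually_avoids r XY (proj1 Hr)) as [Nr HNr].
  destruct (injective_eventually_avoids s XY (proj1 Hs)) as [Ns HNs].
  destruct (Hrel_r N Nr) as [k [i [Hk [Hi Hki]]]].
  destruct (Hrel_s N Ns) as [l [j [Hl [Hj Hlj]]]].
  exists i, j. split; [intros m Hm; apply HNr; lia|].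
  split; [intros m Hm; apply HNs; lia|].
  apply (reach_avoiding_lift XX XY (rho k) (sigma l)); auto.
  intros x y Hy Hxy. apply HXX. now exists y.
Qed.

Lemma image_separation (A B : X -> Prop) :
  separation A B -> separation (rel_image R A) (rel_image R B).
Proof.
  intros [Hcov Hedge]. split.
  - intros y. destruct (coupling_fiber_l _ _ _ cR y) as [[x Hx] _].
    destruct (Hcov x); [left | right]; exists x; auto.
  - intros y y' Hyy' (_ & HnB & _ & HnA).
    destruct (coupling_adj_r _ _ _ cR y y' Hyy') as [x [Hx Hx']].
    destruct (Hcov x); [apply HnA | apply HnB]; exists x; auto.
Qed.

Lemma image_separator (A B : X -> Prop) y :
  separation A B -> rel_image R A y -> rel_image R B y ->
  rel_image R (fun x => A x /\ B x) y.
Proof.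
  intros Hsep [x1 [Hx1 HR1]] [x2 [Hx2 HR2]].
  destruct (reach_meets_separator X A B Hsep (fun x => R x y) x1 x2) as [x [Hx [HA HB]]]; auto.
  - apply (coupling_fiber_l _ _ _ cR y); auto.
  - exists x. auto.
Qed.

Lemma image_frequently_in (A : X -> Prop) rho r :
  cofinally_related rho r -> tail_in A rho -> frequently_in (rel_image R A) r.
Proof.
  intros Hrel [N HN] M. destruct (Hrel N M) as [k [n [Hk [Hn HR]]]].
  exists n. split; auto. exists (rho k). auto.
Qed.

Theorem accessible_of_coupling K :
  (forall y, finite_set (fun x => R x y)) -> (forall x, card_le (R x) K) ->
  accessible X -> accessible Y.
Proof.
  intros Hfin_l HK [KX HKX]. exists (KX * K). intros r s Hr Hs Hne.
  assert (Hfin_r : forall x, finite_set (R x)) by (intros x; exists K; apply HK).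
  destruct (ray_lift r Hfin_r Hr) as [rho [Hrho Hrel_r]].
  destruct (ray_lift s Hfin_r Hs) as [sigma [Hsigma Hrel_s]].
  assert (Hne' : ~ ray_equiv rho sigma).
  { intros Heq. apply Hne. apply (ray_equiv_descends rho sigma); auto. }
  destruct (HKX rho sigma Hrho Hsigma Hne') as (A & B & Hsep & [l [Hl Hsub]] & HdA & HdB).
  assert (Hcard : card_le (fun y => rel_image R A y /\ rel_image R B y) (KX * K)).
  { apply card_le_mono with (rel_image R (fun x => In x l)) (length l * K).
    - intros y [HA HB]. destruct (image_separator A B y Hsep HA HB) as [x [Hx Hxy]].
      exists x. auto.
    - apply Nat.mul_le_mono_r, Hl.
    - apply list_image_card, HK. }
  exists (rel_image R A), (rel_image R B). split; [apply image_separation, Hsep|].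
  split; [exact Hcard|].
  apply separation_distinguishes; auto.
  - apply image_separation, Hsep.
  - exists (KX * K). exact Hcard.
  - apply image_frequently_in with rho; auto. apply HdA; auto. apply ray_equiv_refl, Hrho.
  - apply image_frequently_in with sigma; auto. apply HdB; auto. apply ray_equiv_refl, Hsigma.
Qed.

End Transfer.

Theorem lemma3p6 (G H : Graph) :
  (forall (GS : H -> G -> Prop) (GE : H -> G -> G -> Prop),
     Hdecomp GS GE -> point_finite GS -> honest GS ->
     (forall h, connected_sub (GS h) (GE h)) ->
     (exists K, forall h, card_le (GS h) K) ->
     accessible H -> accessible G) /\
  (forall (GS : H -> G -> Prop) (GE : H -> G -> G -> Prop),
     Hdecomp GS GE -> honest GS ->
     (forall h, connected_sub (GS h) (GE h) /\ finite_set (GS h)) ->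
     (exists K, forall v : G, card_le (fun h => GS h v) K) ->
     accessible G -> accessible H).
Proof.
  split.
  - intros GS GE Hdec Hpf Hhon Hconn [K HK].
    exact (accessible_of_coupling H G GS (honest_decomp_coupling G H GS GE Hdec Hhon Hconn) K Hpf HK).
  - intros GS GE Hdec Hhon Hparts [K HK].
    assert (cGS : coupling H G GS).
    { apply (honest_decomp_coupling G H GS GE); auto. apply Hparts. }
    apply (accessible_of_coupling G H _ (coupling_flip H G GS cGS) K); auto.
    apply Hparts.
Qed.
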